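(* Let $(\mathbb{K},|\cdot|)$ be a valued field such that $\mathbb{K}$ is real closed and $|\cdot|$ is of $p$-adic type for some prime $p$. Then the completion $\mathbb{K}^c$ is algebraically closed.
   Context: A field is real closed if it admits an ordering in which every positive element has a square root and every polynomial of odd degree has a root (such fields have characteristic $0$). A valued field is a field with an absolute value; $\mathbb{K}^c$ is its completion. A valued field of characteristic $0$ is of $p$-adic type if the restriction of its absolute value to the prime field $\mathbb{Q}$ is equivalent to the $p$-adic absolute value. *)

From HB Require Import structures.
From mathcomp Require Import all_boot all_order all_algebra.
From mathcomp Require Import all_classical all_reals.
From mathcomp Require Import Rstruct exp.
Set Implicit Arguments. Unset Strict Implicit. Unset Printing Implicit Defensive.
Import Order.TTheory GRing.Theory Num.Theory.
Local Open Scope ring_scope.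

Notation RR := Rdefinitions.R.

Definition is_absolute_value (K : fieldType) (a : K -> RR) : Prop :=
  (forall x, 0 <= a x) /\
  (forall x, a x = 0 <-> x = 0) /\
  (forall x y, a (x * y) = a x * a y) /\
  (forall x y, a (x + y) <= a x + a y).

Definition is_field_ordering (K : fieldType) (le : K -> K -> Prop) : Prop :=
  (forall x, le x x) /\
  (forall x y, le x y -> le y x -> x = y) /\
  (forall x y z, le x y -> le y z -> le x z) /\
  (forall x y, le x y \/ le y x) /\
  (forall x y z, le x y -> le (x + z) (y + z)) /\
  (forall x y, le 0 x -> le 0 y -> le 0 (x * y)).

Definition real_closed (K : fieldType) : Prop :=
  exists le : K -> K -> Prop,
    is_field_ordering le /\
    (forall x : K, le 0 x -> x != 0 -> exists y, y * y = x) /\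
    (forall P : {poly K}, odd (size P).-1 -> exists x, root P x).

Definition padic_val (p : nat) (q : rat) : int :=
  (logn p `|numq q|%N)%:Z - (logn p `|denq q|%N)%:Z.

Definition padic_abs (p : nat) (q : rat) : RR :=
  if q == 0 then 0 else (p%:R : RR) ^ (- padic_val p q).

Definition equiv_abs (T : Type) (a1 a2 : T -> RR) : Prop :=
  exists c : RR, 0 < c /\ forall x, a1 x = powR (a2 x) c.

Definition padic_type (K : fieldType) (a : K -> RR) (p : nat) : Prop :=
  equiv_abs (fun q : rat => a (ratr q)) (padic_abs p).

Definition abs_complete (L : fieldType) (a : L -> RR) : Prop :=
  forall u : nat -> L,
    (forall e : RR, 0 < e -> exists N, forall m n, (N <= m)%N -> (N <= n)%N ->
        a (u m - u n) < e) ->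
    exists l, forall e : RR, 0 < e -> exists N, forall n, (N <= n)%N ->
        a (u n - l) < e.

Definition is_completion (K L : fieldType) (aK : K -> RR) (aL : L -> RR)
    (i : {rmorphism K -> L}) : Prop :=
  is_absolute_value aL /\ abs_complete aL /\
  (forall x, aL (i x) = aK x) /\
  (forall y (e : RR), 0 < e -> exists x, aL (y - i x) < e).

Definition alg_closed (L : fieldType) : Prop :=
  forall P : {poly L}, (1 < size P)%N -> exists x, root P x.

From HB Require Import structures.
From mathcomp Require Import all_boot all_order all_algebra.
From mathcomp Require Import all_classical all_reals.
From mathcomp Require Import Rstruct exp.
From mathcomp Require Import closed_field complex ring lra.
Set Implicit Arguments. Unset Strict Implicit. Unset Printing Implicit Defensive.
Import Order.TTheory GRing.Theory Num.Theory complex.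
Local Open Scope ring_scope.

Notation Eigen1Vec K d := (@Eigen1Vec_def _ (Phant K) d).

Definition splits (L : fieldType) (Q : {poly L}) : Prop :=
  exists rs : seq L, Q = \prod_(z <- rs) ('X - z%:P).

Section ComplexConjugation.
Variable R : fieldType.
Local Open Scope complex_scope.

Lemma conjcD (x y : R[i]) : conjc (x + y) = conjc x + conjc y.
Proof. by case: x y => a b [c d] /=; rewrite opprD. Qed.

Lemma conjcM (x y : R[i]) : conjc (x * y) = conjc x * conjc y.
Proof. by case: x y => a b [c d] /=; simpc. Qed.

Lemma conjcN (x : R[i]) : conjc (- x) = - conjc x.
Proof. by case: x. Qed.

Lemma conjc_sum (I : Type) (s : seq I) (P : pred I) (F : I -> R[i]) :
  conjc (\sum_(k <- s | P k) F k) = \sum_(k <- s | P k) conjc (F k).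
Proof. by elim/big_rec2: _ => [|k y z _ <-]; rewrite ?conjcD //= oppr0. Qed.

Lemma sqrc_i : 'i%C * 'i%C = -1 :> R[i].
Proof. by simpc. Qed.

Lemma conjc_i : conjc 'i%C = - 'i%C :> R[i].
Proof. by apply/eqP; rewrite eq_complex /= oppr0 !eqxx. Qed.

End ComplexConjugation.

Section HermitianTransport.
Variable R : realFieldType.
Local Open Scope complex_scope.
Local Notation toC := (real_complex R).

Definition adjmx m n (A : 'M[R[i]]_(m, n)) : 'M[R[i]]_(n, m) := map_mx conjc A^T.

Lemma adjmxD m n (A B : 'M[R[i]]_(m, n)) : adjmx (A + B) = adjmx A + adjmx B.
Proof. by apply/matrixP => i j; rewrite !mxE conjcD. Qed.

Lemma adjmxN m n (A : 'M[R[i]]_(m, n)) : adjmx (- A) = - adjmx A.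
Proof. by apply/matrixP => i j; rewrite !mxE conjcN. Qed.

Lemma adjmxZ m n c (A : 'M[R[i]]_(m, n)) : adjmx (c *: A) = conjc c *: adjmx A.
Proof. by apply/matrixP => i j; rewrite !mxE conjcM. Qed.

Lemma adjmxM m n p (A : 'M[R[i]]_(m, n)) (B : 'M_(n, p)) :
  adjmx (A *m B) = adjmx B *m adjmx A.
Proof.
apply/matrixP => i j; rewrite !mxE conjc_sum.
by apply: eq_bigr => k _; rewrite !mxE conjcM mulrC.
Qed.

Lemma adjmxK m n (A : 'M[R[i]]_(m, n)) : adjmx (adjmx A) = A.
Proof. by apply/matrixP => i j; rewrite !mxE; case: (A i j) => a b /=; rewrite opprK. Qed.

Variable n : nat.

Definition herm (X : 'M[R]_n) : 'M[R[i]]_n :=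
  \matrix_(i, j) ((X i j + X j i) +i* (X i j - X j i)).

Definition unherm (B : 'M[R[i]]_n) : 'M[R]_n :=
  \matrix_(i, j) ((Re (B i j) + Im (B i j)) / 2).

Lemma adjmx_herm X : adjmx (herm X) = herm X.
Proof. by apply/matrixP => i j; rewrite !mxE /= opprB addrC. Qed.

Lemma hermK : cancel herm unherm.
Proof.
by move=> X; apply/matrixP => i j; rewrite !mxE /=; field.
Qed.

Lemma unhermK B : adjmx B = B -> herm (unherm B) = B.
Proof.
move=> /matrixP adjB; apply/matrixP => i j; rewrite !mxE.
have := adjB j i; rewrite !mxE; case: (B i j) (B j i) => a b [_ _] [<- <-] /=.
by congr Complex; field.
Qed.

Lemma hermD X Y : herm (X + Y) = herm X + herm Y.
Proof. by apply/matrixP => i j; rewrite !mxE /=; congr Complex; ring. Qed.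

Lemma hermZ a X : herm (a *: X) = a%:C *: herm X.
Proof. by apply/matrixP => i j; rewrite !mxE /=; simpc; congr Complex; ring. Qed.

Lemma unhermD B C : unherm (B + C) = unherm B + unherm C.
Proof.
apply/matrixP => i j; rewrite !mxE.
by case: (B i j) (C i j) => a b [c d] /=; field.
Qed.

Lemma unhermZ a B : unherm (a%:C *: B) = a *: unherm B.
Proof.
apply/matrixP => i j; rewrite !mxE.
by case: (B i j) => b c /=; simpc; field.
Qed.

Section HermitianOperator.
Variable T : {linear 'M[R[i]]_n -> 'M[R[i]]_n}.

Definition herm_op X := unherm (T (herm X)).

Fact herm_op_is_linear : linear herm_op.
Proof. by move=> a X Y; rewrite /herm_op hermD hermZ linearP unhermD unhermZ. Qed.

HB.instance Definition _ := GRing.isLinear.Build R 'M[R]_n 'M[R]_n _ herm_op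
  herm_op_is_linear.

End HermitianOperator.


End HermitianTransport.

Lemma Eigen1Vec_squareP (K : fieldType) (d : nat) :
  Eigen1Vec K d <->
  forall n (f : 'M[K]_n), ~~ (d %| n)%N -> exists a, eigenvalue f a.
Proof.
split=> [E1V n f dn|eigen_sq m V dV f fV].
  by apply: (E1V _ 1%:M); rewrite ?mxrank1 ?submx1.
have [a] := eigen_sq _ (restrict V f) dV.
by move=> /(eigenvalue_restrict fV); exists a.
Qed.

Lemma eigenvalue_of_mx (K : fieldType) m n (f : 'M[K]_n) (X : 'M_(m, n)) a :
  X != 0 -> X *m f = a *: X -> eigenvalue f a.
Proof.
move=> X_neq0 Xf; apply/eigenvalueP; exists (nz_row X); last by rewrite nz_row_eq0.
by apply/eigenspaceP; apply: submx_trans (nz_row_sub X) _; apply/eigenspaceP.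
Qed.

Lemma eigenvalue_of_quadratic (K : fieldType) m n (f : 'M[K]_n) (X : 'M_(m, n)) r1 r2 :
  X != 0 -> X *m (f - r1%:M) *m (f - r2%:M) = 0 -> exists a, eigenvalue f a.
Proof.
move=> X_neq0; set Y := X *m _ => YfE.
have [Y0|Y_neq0] := eqVneq Y 0; [exists r1 | exists r2]; apply: eigenvalue_of_mx.
- exact: X_neq0.
- by apply/eqP; rewrite -subr_eq0 -mul_mx_scalar -mulmxBr -/Y Y0.
- exact: Y_neq0.
by apply/eqP; rewrite -subr_eq0 -mul_mx_scalar -mulmxBr YfE.
Qed.

Lemma pow2_ndvd_half k n : ~~ odd n -> ~~ (2 ^ k.+2 %| n)%N ->
  ~~ (2 ^ k.+1 %| (n * n.-1)./2)%N.
Proof.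
move=> n_even; apply: contra => dvd_half.
have [->|n_gt0] := posnP n; first exact: dvdn0.
have: (2 ^ k.+2 %| n * n.-1)%N.
  rewrite -[(n * n.-1)%N]odd_double_half oddM (negPf n_even) add0n -muln2 expnSr.
  by rewrite dvdn_pmul2r.
rewrite Gauss_dvdl // coprime_pexpl // coprime2n.
by rewrite -[n]prednK // /= in n_even; rewrite negbK in n_even.
Qed.

Section RealClosedComplex.
Variable R : realFieldType.
Hypothesis R_odd_root : forall P : {poly R}, odd (size P).-1 -> exists x, root P x.
Hypothesis R_sqrt : forall x : R, 0 <= x -> exists y, y * y = x.
Local Open Scope complex_scope.

Lemma real_eigen_odd : Eigen1Vec R 2.
Proof.
apply/Eigen1Vec_squareP => n f n_odd; have [|a] := @R_odd_root (char_poly f).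
  by rewrite size_char_poly /= -[odd n]negbK -dvdn2.
by rewrite -eigenvalue_root_char; exists a.
Qed.

Lemma complex_eigen_odd : Eigen1Vec R[i] 2.
Proof.
apply/Eigen1Vec_squareP => n A n_odd.
pose T1 := mulmxr A \+ mulmx (adjmx A).
pose T2 := 'i%C \*: (mulmx (adjmx A) \- mulmxr A).
have adjT1 B : adjmx B = B -> adjmx (T1 B) = T1 B.
  by move=> adjB; rewrite /= adjmxD !adjmxM adjmxK adjB addrC.
have adjT2 B : adjmx B = B -> adjmx (T2 B) = T2 B.
  move=> adjB; rewrite /= adjmxZ adjmxD adjmxN !adjmxM adjmxK adjB.
  by rewrite conjc_i scaleNr -scalerN opprB.
have T12 B : T1 (T2 B) = T2 (T1 B).
  rewrite /T1 /T2 /= -!(scalemxAl, scalemxAr) -scalerDr; congr (_ *: _).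
  rewrite !(mulmxDl, mulmxDr, mulNmx, mulmxN, mulmxA).
  move: (adjmx A *m B *m A) (B *m A *m A) (adjmx A *m adjmx A *m B) => x y z.
  by rewrite addrC addrA subrK [y + x]addrC opprD addrA [x + z]addrC addrK.
have T1T2 B : T1 B + 'i%C *: T2 B = (B *m A) *+ 2.
  by rewrite /T1 /T2 /= scalerA sqrc_i scaleN1r opprB addrACA subrr addr0 mulr2n.
pose L1 := lin_mx (herm_op T1); pose L2 := lin_mx (herm_op T2).
have [] := @Lemma3 _ _ real_eigen_odd 1 _ 1%:M _ [:: L1; L2] (erefl _).
- by move: n_odd; rewrite mxrank1 !dvdn2 oddM andbb.
- by move=> L _; rewrite submx1.
- suff commL : L1 *m L2 = L2 *m L1.
    by move=> L L'; rewrite !inE => /orP[] /eqP-> /orP[] /eqP->.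
  apply/eqP/mulmxP => u; rewrite !mulmxA !mul_rV_lin /= !mxvecK.
  congr mxvec; rewrite /herm_op.
  by rewrite !unhermK ?adjT1 ?adjT2 ?adjmx_herm //; congr unherm; exact/esym/T12.
move=> v v_neq0 Hv.
have [a /eigenspaceP vL1] := Hv L1 (mem_head _ _).
have [b /eigenspaceP vL2] : exists b, (v <= eigenspace L2 b)%MS.
  by apply: Hv; rewrite !inE eqxx orbT.
pose X := vec_mx v; pose B := herm X.
have TB (T : {linear 'M[R[i]]_n -> 'M_n}) c : v *m lin_mx (herm_op T) = c *: v ->
    adjmx (T B) = T B -> T B = c%:C *: B.
  move=> vT adjTB; rewrite -[T B]unhermK // -/(herm_op T X) -hermZ; congr herm.
  by move: vT; rewrite mul_rV_lin /= => /(congr1 vec_mx); rewrite mxvecK linearZ.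
have BA : B *m A = ((a%:C + 'i%C * b%:C) / 2%:R) *: B.
  have T1B : T1 B = a%:C *: B := TB _ a vL1 (adjT1 _ (adjmx_herm X)).
  have T2B : T2 B = b%:C *: B := TB _ b vL2 (adjT2 _ (adjmx_herm X)).
  have := T1T2 B; rewrite T1B T2B.
  rewrite scalerA -scalerDl [_ / 2%:R]mulrC -scalerA => ->.
  rewrite -[B *m A *+ 2]scaler_nat scalerA mulVf ?scale1r //.
  by rewrite -(rmorph_nat (real_complex R)) fmorph_eq0 pnatr_eq0.
have B_neq0 : B != 0.
  apply: contraNneq v_neq0 => B0; rewrite -vec_mx_eq0 -/X -[X]hermK -/B B0.
  by apply/eqP/matrixP => i j; rewrite !mxE /= addr0 mul0r.
by exists ((a%:C + 'i%C * b%:C) / 2%:R); apply: eigenvalue_of_mx BA.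
Qed.

Lemma complex_natr_neq0 k : (k > 0)%N -> (k%:R : R[i]) != 0.
Proof. by move=> k_gt0; rewrite -(rmorph_nat (real_complex R)) fmorph_eq0 pnatr_eq0 -lt0n. Qed.

Lemma sqrt_ge0 (x : R) : 0 <= x -> exists y, 0 <= y /\ y * y = x.
Proof.
move=> /R_sqrt [y yy]; exists `|y|; split => //.
by rewrite -normrM -yy ger0_norm // -expr2 sqr_ge0.
Qed.

Lemma complex_sqrt (z : R[i]) : exists w, w * w = z.
Proof.
case: z => a b.
have [r [r_ge0 rr]] : exists r, 0 <= r /\ r * r = a * a + b * b.
  by apply: sqrt_ge0; nra.
have [x [x_ge0 xx]] : exists x, 0 <= x /\ x * x = (r + a) / 2.
  by apply: sqrt_ge0; nra.
have [y [y_ge0 yy]] : exists y, 0 <= y /\ y * y = (r - a) / 2.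
  by apply: sqrt_ge0; nra.
have re_sq : x * x - y * y = a by rewrite xx yy; field.
have : (x * y + y * x - b) * (x * y + y * x + b) = 0.
  have -> : (x * y + y * x - b) * (x * y + y * x + b) =
            4 * (x * x) * (y * y) - b * b by ring.
  rewrite xx yy (_ : 4 * ((r + a) / 2) * ((r - a) / 2) = r * r - a * a).
    by rewrite rr; ring.
  by field.
move/eqP; rewrite mulf_eq0 => /orP[] /eqP im_sq.
  by exists (x +i* y); simpc; congr Complex; lra.
by exists (x -i* y); simpc; congr Complex; lra.
Qed.

Lemma complex_vieta (s p : R[i]) : exists r1 r2, r1 + r2 = s /\ r1 * r2 = p.
Proof.
have [w ww] := complex_sqrt (s * s - 4%:R * p).
exists ((s + w) / 2%:R), ((s - w) / 2%:R); split.
  by field; rewrite complex_natr_neq0.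
have -> : (s + w) / 2%:R * ((s - w) / 2%:R) = (s * s - w * w) / 4%:R.
  by field; rewrite !complex_natr_neq0.
by rewrite ww opprB addrC subrK mulrC mulKf ?complex_natr_neq0.
Qed.

Definition cskew n : 'M[R[i]]_(n * n) := map_mx (real_complex R) (skew_def (Phant R) n).

Lemma rank_cskew n : \rank (cskew n) = (n * n.-1)./2.
Proof. by rewrite mxrank_map rank_skew. Qed.

Lemma cskewP n (M : 'rV[R[i]]_(n * n)) :
  reflect ((vec_mx M)^T = - vec_mx M) (M <= cskew n)%MS.
Proof.
apply: (iffP idP) => [/submxP[D ->]|M_skew].
  rewrite mulmx_sum_row !raddf_sum /=; apply: eq_bigr => k _.
  rewrite !linearZ /= -map_row -map_vec_mx map_trmx; congr (_ *: _).
  by have /skewP -> := row_sub k (skew_def (Phant R) n); rewrite map_mxN.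
have part_skew (g : R[i] -> R) : {morph g : x / - x} ->
    (vec_mx (map_mx g M))^T = - vec_mx (map_mx g M).
  move=> gN; apply/matrixP => i j; move/matrixP: M_skew => /(_ i j).
  by rewrite !mxE => ->; rewrite gN.
have -> : M = map_mx (real_complex R) (map_mx (@Re R) M) +
              'i%C *: map_mx (real_complex R) (map_mx (@Im R) M).
  by apply/matrixP => i j; rewrite !mxE; case: (M i j) => a b; simpc.
rewrite addmx_sub ?scalemx_sub // map_submx; apply/skewP/part_skew; by case.
Qed.

Lemma complex_eigen_pow2 k : Eigen1Vec R[i] (2 ^ k.+1).
Proof.
elim: k => [|k IHk]; first by rewrite expn1; exact: complex_eigen_odd.
apply/Eigen1Vec_squareP => n f n_ndvd.
have [n_odd|n_even] := boolP (odd n).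
  by apply: (proj1 (Eigen1Vec_squareP _ _) complex_eigen_odd); rewrite dvdn2 n_odd.
pose L1 := lin_mx (mulmxr f \+ mulmx f^T).
pose L2 := lin_mx (mulmxr f \o mulmx f^T).
have skew_stable : {in [:: L1; L2], forall L, (cskew n *m L <= cskew n)%MS}.
  move=> L; rewrite !inE => /orP[] /eqP->; apply/rV_subP => v /submxP[s ->];
  have /cskewP skew_u := submxMl s (cskew n);
  rewrite mulmxA; apply/cskewP; rewrite mul_rV_lin /= mxvecK.
    by rewrite linearD /= !trmx_mul trmxK skew_u mulmxN mulNmx addrC opprD.
  by rewrite !trmx_mul trmxK skew_u mulNmx mulmxN mulmxA.
have [] := @Lemma3 _ _ IHk 1 _ (cskew n) _ [:: L1; L2] (erefl _) skew_stable.
- by rewrite rank_cskew pow2_ndvd_half.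
- suff commL : L1 *m L2 = L2 *m L1.
    by move=> L L'; rewrite !inE => /orP[] /eqP-> /orP[] /eqP->.
  apply/eqP/mulmxP => u; rewrite !mulmxA !mul_rV_lin /= !mxvecK.
  by rewrite !(mulmxDr, mulmxDl, mulmxA).
move=> v v_neq0 Hv.
have [a /eigenspaceP] := Hv L1 (mem_head _ _).
rewrite mul_rV_lin /= => /(congr1 vec_mx); rewrite mxvecK linearZ /= => vL1.
have [b /eigenspaceP] : exists b, (v <= eigenspace L2 b)%MS.
  by apply: Hv; rewrite !inE eqxx orbT.
rewrite mul_rV_lin /= => /(congr1 vec_mx); rewrite mxvecK linearZ /= => vL2.
set X := vec_mx v in vL1 vL2.
have Xff : X *m f *m f = a *: (X *m f) - b *: X.
  by rewrite -vL2 scalemxAl -vL1 mulmxDl addrK.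
have [r1 [r2 [sum_r prod_r]]] := complex_vieta a b.
apply: (@eigenvalue_of_quadratic _ _ _ f X r1 r2); first by rewrite vec_mx_eq0.
rewrite !mulmxBr !mul_mx_scalar mulmxBl Xff -scalemxAl -sum_r -prod_r.
rewrite scalerBr scalerA [r2 * r1]mulrC scalerDl.
move: (r1 *: _) (r2 *: _) ((r1 * r2) *: X) => p q t.
by rewrite [_ - t - p]addrAC [p + q]addrC addrK subrr.
Qed.

Lemma complex_eigenvalue n (f : 'M[R[i]]_n) : (0 < n)%N -> exists a, eigenvalue f a.
Proof.
case: n f => // n f _; apply: (proj1 (Eigen1Vec_squareP _ _) (@complex_eigen_pow2 n) _ f).
by rewrite (contra (dvdn_leq _)) // -ltnNge ltn_expl.
Qed.

Lemma complex_closed : GRing.closed_field_axiom R[i].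
Proof.
move=> n P n_gt0; pose p := 'X^n - \poly_(i < n) P i.
have size_p : size p = n.+1.
  by rewrite size_polyDl size_polyXn // size_polyN ltnS size_poly.
have p_monic : p \is monic.
  by rewrite monicE lead_coefDl ?lead_coefXn // size_polyXn size_polyN ltnS size_poly.
have [|x] := complex_eigenvalue (companionmx p); first by rewrite size_p.
rewrite eigenvalue_root_char companionmxK // => /rootP.
by rewrite hornerD hornerN hornerXn horner_poly => /eqP; rewrite subr_eq0 => /eqP; exists x.
Qed.

End RealClosedComplex.

Section OrderedField.
Variables (K : fieldType) (le : K -> K -> Prop).
Hypothesis le_order : is_field_ordering le.

Let le_anti : forall x y, le x y -> le y x -> x = y. Proof. by case: le_order => _ []. Qed.
Let le_trans : forall x y z, le x y -> le y z -> le x z.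
Proof. by case: le_order => _ [_ []]. Qed.
Let le_total : forall x y, le x y \/ le y x. Proof. by case: le_order => _ [_ [_ []]]. Qed.
Let lerD2r : forall x y z, le x y -> le (x + z) (y + z).
Proof. by case: le_order => _ [_ [_ [_ []]]]. Qed.
Let le0M : forall x y, le 0 x -> le 0 y -> le 0 (x * y).
Proof. by case: le_order => _ [_ [_ [_ []]]]. Qed.

Let subr_ge0 x y : le 0 (y - x) <-> le x y.
Proof. by split=> [/(lerD2r x)|/(lerD2r (- x))]; rewrite ?add0r ?subrK ?subrr. Qed.

Definition ordered_field : Type := K.
HB.instance Definition _ := GRing.Field.on ordered_field.

Let leb (x y : ordered_field) := `[< le x y >].
Let ltb (x y : ordered_field) := (y != x) && leb x y.
Let normb (x : ordered_field) := if leb 0 x then x else - x.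

Fact ordered_le0_add x y : leb 0 x -> leb 0 y -> leb 0 (x + y).
Proof.
move=> /asboolP x_ge0 /asboolP y_ge0; apply/asboolP.
by apply: le_trans y_ge0 _; rewrite -[y in le y _]add0r; apply: lerD2r.
Qed.

Fact ordered_le0_mul x y : leb 0 x -> leb 0 y -> leb 0 (x * y).
Proof. by move=> /asboolP x_ge0 /asboolP y_ge0; apply/asboolP/le0M. Qed.

Fact ordered_le0_anti x : leb 0 x -> leb x 0 -> x = 0.
Proof. by move=> /asboolP x_ge0 /asboolP x_le0; apply: le_anti. Qed.

Fact ordered_sub_ge0 x y : leb 0 (y - x) = leb x y.
Proof. by apply/asboolP/asboolP => /subr_ge0. Qed.

Fact ordered_le0_total x : leb 0 x || leb x 0.
Proof. by rewrite /leb; case: (le_total 0 x) => /asboolP ->; rewrite ?orbT. Qed.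

Fact ordered_normN x : normb (- x) = normb x.
Proof.
rewrite /normb -[in leb 0 (- x)]sub0r ordered_sub_ge0.
case: (boolP (leb 0 x)) => x_ge0; case: (boolP (leb x 0)) => x_le0; rewrite ?opprK //.
  by rewrite (ordered_le0_anti x_ge0 x_le0) oppr0.
by move: (ordered_le0_total x); rewrite (negPf x_ge0) (negPf x_le0).
Qed.

Fact ordered_ge0_norm x : leb 0 x -> normb x = x.
Proof. by rewrite /normb => ->. Qed.

Fact ordered_lt_def x y : ltb x y = (y != x) && leb x y.
Proof. by []. Qed.

HB.instance Definition _ := Num.IntegralDomain_isLeReal.Build ordered_field
  ordered_le0_add ordered_le0_mul ordered_le0_anti ordered_sub_ge0
  ordered_le0_total ordered_normN ordered_ge0_norm ordered_lt_def.

Hypothesis le_sqrt : forall x : K, le 0 x -> x != 0 -> exists y, y * y = x.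
Hypothesis odd_root : forall P : {poly K}, odd (size P).-1 -> exists x, root P x.

Lemma ordered_sqrt (x : ordered_field) : 0 <= x -> exists y, y * y = x.
Proof.
move=> /asboolP x_ge0; have [->|x_neq0] := eqVneq x 0; last exact: le_sqrt.
by exists 0; rewrite mulr0.
Qed.

Lemma ordered_natr_sqrt m : exists t : K, t * t = m%:R.
Proof. by apply: (@ordered_sqrt m%:R); rewrite ler0n. Qed.

Definition ordered_complex : Type := complex ordered_field.
HB.instance Definition _ := GRing.Field.on ordered_complex.
HB.instance Definition _ := Field_isAlgClosed.Build ordered_complex
  (@complex_closed ordered_field odd_root ordered_sqrt).

Variables (L : fieldType) (i : {rmorphism K -> L}) (j : L).
Hypothesis j2 : j * j = -1.

Definition complex_embedding (z : ordered_complex) : L := i (Re z) + j * i (Im z).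

Fact complex_embedding_zmod_morphism : zmod_morphism complex_embedding.
Proof. by case=> a b [c d]; rewrite /complex_embedding /= !rmorphB; ring. Qed.

Fact complex_embedding_monoid_morphism : monoid_morphism complex_embedding.
Proof.
split=> [|[a b] [c d]]; rewrite /complex_embedding /=.
  by rewrite rmorph1 rmorph0 mulr0 addr0.
rewrite !rmorphB !rmorphD !rmorphM /=.
have -> : (i a + j * i b) * (i c + j * i d) =
  i a * i c + j * j * (i b * i d) + j * (i a * i d + i b * i c) by ring.
by rewrite j2; ring.
Qed.

HB.instance Definition _ := GRing.isZmodMorphism.Build _ _ complex_embedding
  complex_embedding_zmod_morphism.
HB.instance Definition _ := GRing.isMonoidMorphism.Build _ _ complex_embedding
  complex_embedding_monoid_morphism.

Lemma ordered_split (q : {poly K}) : q \is monic -> splits (map_poly i q).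
Proof.
move=> q_monic; pose qC : {poly ordered_complex} := map_poly (real_complex ordered_field) q.
have [rs qC_split] := closed_field_poly_normal qC.
exists (map complex_embedding rs).
have -> : map_poly i q = map_poly complex_embedding qC.
  rewrite -map_poly_comp; apply: eq_map_poly => x /=.
  by rewrite /complex_embedding /= rmorph0 mulr0 addr0.
rewrite qC_split lead_coef_map (monicP q_monic) rmorph1 scale1r rmorph_prod big_map.
by apply: eq_bigr => z _; exact: map_polyXsubC.
Qed.

End OrderedField.

Lemma real_closed_split (K L : fieldType) (i : {rmorphism K -> L}) (j : L) :
  real_closed K -> j * j = -1 -> forall q : {poly K}, q \is monic -> splits (map_poly i q).
Proof. by move=> [le [le_order [le_sqrt odd_root]]] j2; exact: (ordered_split le_order le_sqrt odd_root i j2). Qed.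

Lemma real_closed_natr_sqrt (K : fieldType) :
  real_closed K -> forall m, exists t : K, t * t = m%:R.
Proof. by move=> [le [le_order [le_sqrt _]]]; exact: (ordered_natr_sqrt le_order le_sqrt). Qed.

Lemma expr_bernoulli_le1 (r : RR) n : 0 <= r <= 1 ->
  r ^+ n * (1 + n%:R * (1 - r)) <= 1.
Proof.
move=> /andP[r_ge0 r_le1]; elim: n => [|n IHn]; first by rewrite expr0 mul0r addr0 mul1r.
have rn_ge0 : 0 <= r ^+ n by rewrite exprn_ge0.
have : 0 <= r ^+ n * ((n%:R + 1) * ((1 - r) * (1 - r))).
  by rewrite mulr_ge0 // mulr_ge0 ?addr_ge0 ?ler0n // -expr2 sqr_ge0.
rewrite exprS -natr1; nra.
Qed.

Lemma expr_lt_eventually (r e : RR) : 0 <= r < 1 -> 0 < e ->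
  exists N, forall n, (N <= n)%N -> r ^+ n < e.
Proof.
move=> /andP[r_ge0 r_lt1] e_gt0; have s_gt0 : 0 < e * (1 - r) by rewrite mulr_gt0 ?subr_gt0.
exists (Num.bound (e * (1 - r))^-1) => n le_bound_n.
have := archi_boundP (ltW (_ : 0 < (e * (1 - r))^-1)); rewrite invr_gt0 => /(_ s_gt0).
rewrite -(ler_nat RR) in le_bound_n; move: (Num.bound _) le_bound_n => N le_Nn.
move=> lt_N; have inv1 : (e * (1 - r))^-1 * (e * (1 - r)) = 1.
  by rewrite mulVf // gt_eqF.
have n_big : 1 < n%:R * (e * (1 - r)).
  by rewrite -[X in X < _]inv1 ltr_pM2r //; apply: lt_le_trans lt_N le_Nn.
have := @expr_bernoulli_le1 r n; rewrite r_ge0 ltW //= => /(_ isT).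
have := exprn_ge0 n r_ge0; have := ler0n RR n; nra.
Qed.

Lemma dependent_sequence (T : Type) (P : nat -> T -> Prop) (R : nat -> T -> T -> Prop) x0 :
  P 0%N x0 -> (forall k x, P k x -> exists y, P k.+1 y /\ R k x y) ->
  exists u : nat -> T, forall k, P k (u k) /\ R k (u k) (u k.+1).
Proof.
move=> P0 step.
have step' (kx : nat * T) : exists y, P kx.1 kx.2 -> P kx.1.+1 y /\ R kx.1 kx.2 y.
  case: kx => k x /=; have [Pkx|] := boolp.pselect (P k x); last by exists x.
  by have [y] := step k x Pkx; exists y.
have [next nextP] := boolp.choice step'.
pose u := fix u k := if k is k'.+1 then next (k', u k') else x0.
have Pu k : P k (u k) by elim: k => // k IHk; have [] := nextP (k, u k) IHk.
by exists u => k; have [] := nextP (k, u k) (Pu k).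
Qed.

Section AbsoluteValue.
Variables (L : fieldType) (a : L -> RR).
Hypothesis a_abs : is_absolute_value a.

Lemma absv_ge0 x : 0 <= a x. Proof. by case: a_abs. Qed.
Lemma absv_eq0 x : a x = 0 <-> x = 0. Proof. by case: a_abs => _ []. Qed.
Lemma absvM x y : a (x * y) = a x * a y. Proof. by case: a_abs => _ [_ []]. Qed.
Lemma ler_absvD x y : a (x + y) <= a x + a y. Proof. by case: a_abs => _ [_ [_]]. Qed.

Lemma absv0 : a 0 = 0. Proof. exact/absv_eq0. Qed.

Lemma absv1 : a 1 = 1.
Proof.
have a1_neq0 : a 1 != 0 by apply/eqP => /absv_eq0/eqP; rewrite oner_eq0.
by apply: (mulfI a1_neq0); rewrite -absvM !mulr1.
Qed.

Lemma absvN x : a (- x) = a x.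
Proof.
have aN1 : a (-1) = 1.
  have : a (-1) * a (-1) = 1 by rewrite -absvM mulrNN mulr1 absv1.
  by have := absv_ge0 (-1); nra.
by rewrite -mulN1r absvM aN1 mul1r.
Qed.

Lemma absv_distC x y : a (x - y) = a (y - x).
Proof. by rewrite -absvN opprB. Qed.

Lemma ler_absv_distD x y z : a (x - z) <= a (x - y) + a (y - z).
Proof. by rewrite -[x - z](subrKA y) ler_absvD. Qed.

Lemma absvX x n : a (x ^+ n) = a x ^+ n.
Proof. by elim: n => [|n IHn]; rewrite ?absv1 // !exprS absvM IHn. Qed.

Lemma absv_prod (I : Type) (s : seq I) (F : I -> L) :
  a (\prod_(k <- s) F k) = \prod_(k <- s) a (F k).
Proof. by elim/big_rec2: _ => [|k y z _ <-]; rewrite ?absv1 ?absvM. Qed.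

Lemma ler_absv_sum (I : Type) (s : seq I) (F : I -> L) :
  a (\sum_(k <- s) F k) <= \sum_(k <- s) a (F k).
Proof.
elim/big_rec2: _ => [|k y z _ le_zy]; first by rewrite absv0.
by apply: le_trans (ler_absvD _ _) _; rewrite lerD2l.
Qed.

End AbsoluteValue.

Definition absv_cvg (L : fieldType) (a : L -> RR) (u : nat -> L) (l : L) : Prop :=
  forall e : RR, 0 < e -> exists N, forall n, (N <= n)%N -> a (u n - l) < e.

Section ValuedFieldPolynomials.
Variables (L : fieldType) (a : L -> RR).
Hypothesis a_abs : is_absolute_value a.

Local Notation absv_ge0 := (absv_ge0 a_abs).
Local Notation absvM := (absvM a_abs).
Local Notation ler_absvD := (ler_absvD a_abs).

Lemma horner_bounded (P : {poly L}) (M : RR) :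
  exists2 B, 0 <= B & forall x, a x <= M -> a P.[x] <= B.
Proof.
elim/poly_ind: P => [|P c [B B_ge0 PB]].
  by exists 0 => // x _; rewrite horner0 (absv0 a_abs).
exists (B * `|M| + a c) => [|x xM]; first by rewrite addr_ge0 ?mulr_ge0 ?absv_ge0.
rewrite hornerMXaddC; apply: le_trans (ler_absvD _ _) _; rewrite lerD2r absvM.
apply: ler_pM => //; [exact: absv_ge0 | exact: absv_ge0 | exact: PB |].
exact: le_trans xM (ler_norm M).
Qed.

Lemma horner_lipschitz (P : {poly L}) (M : RR) : exists2 C, 0 <= C &
  forall x y, a x <= M -> a y <= M -> a (P.[x] - P.[y]) <= C * a (x - y).
Proof.
elim/poly_ind: P => [|P c [C C_ge0 PC]].
  by exists 0 => // x y _ _; rewrite !horner0 subr0 (absv0 a_abs) mul0r.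
have [B B_ge0 PB] := horner_bounded P M.
exists (C * `|M| + B) => [|x y xM yM]; first by rewrite addr_ge0 ?mulr_ge0.
rewrite !hornerMXaddC.
have -> : P.[x] * x + c - (P.[y] * y + c) = (P.[x] - P.[y]) * x + P.[y] * (x - y).
  by ring.
apply: le_trans (ler_absvD _ _) _; rewrite !absvM mulrDl.
apply: lerD; last by rewrite ler_wpM2r ?absv_ge0 ?PB.
rewrite mulrAC; apply: ler_pM; rewrite ?absv_ge0 ?mulr_ge0 ?absv_ge0 ?PC //.
exact: le_trans xM (ler_norm M).
Qed.

Lemma horner_coef_diff (F G : {poly L}) N (d M : RR) x :
  (size F <= N.+1)%N -> (size G <= N.+1)%N -> 1 <= M ->
  (forall k, a (F`_k - G`_k) <= d) -> a x <= M ->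
  a (F.[x] - G.[x]) <= N.+1%:R * d * M ^+ N.
Proof.
move=> sF sG M_ge1 FG xM.
have sFG : (size (F - G)%R <= N.+1)%N.
  by apply: leq_trans (size_polyD _ _) _; rewrite size_polyN geq_max sF sG.
rewrite -hornerN -hornerD (horner_coef_wide _ sFG).
apply: le_trans (ler_absv_sum a_abs _ _) _.
rewrite -mulrA mulr_natl -[in X in _ <= X](card_ord N.+1) -sumr_const; apply: ler_sum => k _.
rewrite absvM (absvX a_abs) coefB; apply: ler_pM; rewrite ?exprn_ge0 ?absv_ge0 //.
apply: le_trans (_ : M ^+ k <= _); first by rewrite lerXn2r ?nnegrE ?absv_ge0 //; lra.
by apply: ler_weXn2l; rewrite // -ltnS.
Qed.

Lemma monic_root_le (Q : {poly L}) x : Q \is monic -> root Q x ->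
  a x <= 1 + \sum_(k < (size Q).-1) a Q`_k.
Proof.
move=> Q_monic /rootP Qx0; set N := (size Q).-1.
have S_ge0 : 0 <= \sum_(k < N) a Q`_k by apply: sumr_ge0 => k _; apply: absv_ge0.
have [x_le1|x_gt1] := lerP (a x) 1; first lra.
have Q_size : size Q = N.+1 by rewrite prednK // size_poly_gt0 monic_neq0.
have N_gt0 : (0 < N)%N.
  rewrite lt0n; apply/eqP => N0; move: Qx0.
  rewrite horner_coef Q_size N0 big_ord1 expr0 mulr1.
  by have := monicP Q_monic; rewrite /lead_coef -/N N0 => -> /eqP; rewrite oner_eq0.
move: Qx0; rewrite horner_coef Q_size big_ord_recr /= -/N.
rewrite -[Q`_N]/(lead_coef Q) (monicP Q_monic) mul1r => /eqP.
rewrite addrC addr_eq0 => /eqP xN.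
have : a x ^+ N <= (\sum_(k < N) a Q`_k) * a x ^+ N.-1.
  rewrite -(absvX a_abs) xN (absvN a_abs); apply: le_trans (ler_absv_sum a_abs _ _) _.
  rewrite mulr_suml; apply: ler_sum => k _; rewrite absvM (absvX a_abs).
  by rewrite ler_wpM2l ?absv_ge0 // ler_weXn2l ?ltW // -ltnS prednK.
rewrite -(prednK N_gt0) exprS ler_pM2r ?exprn_gt0 //; [lra | lra].
Qed.

Lemma near_root (rs : seq L) (eta : RR) x :
  0 <= eta -> a (\prod_(z <- rs) ('X - z%:P)).[x] < eta ^+ size rs ->
  exists2 z, z \in rs & a (x - z) < eta.
Proof.
move=> eta_ge0; rewrite horner_prod (absv_prod a_abs) => small.
have [//|far] := boolp.pselect (exists2 z, z \in rs & a (x - z) < eta).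
suff : eta ^+ size rs <= \prod_(z <- rs) a ('X - z%:P).[x] by rewrite leNgt small.
elim: rs far {small} => [|z rs IHrs] far; first by rewrite big_nil.
rewrite big_cons exprS hornerXsubC; apply: ler_pM; rewrite ?exprn_ge0 //.
  by rewrite leNgt; apply/negP => near; apply: far; exists z; rewrite ?mem_head.
by apply: IHrs => -[w w_rs near]; apply: far; exists w; rewrite // inE w_rs orbT.
Qed.

End ValuedFieldPolynomials.

Section CompleteValuedField.
Variables (L : fieldType) (a : L -> RR).
Hypotheses (a_abs : is_absolute_value a) (a_complete : abs_complete a).

Local Notation absv_ge0 := (absv_ge0 a_abs).

Lemma absv_cvg_halving (u : nat -> L) :
  (forall k, a (u k - u k.+1) <= 2^-1 ^+ k) -> exists l, absv_cvg a u l.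
Proof.
move=> u_step.
have u_dist n m : (n <= m)%N -> a (u n - u m) <= 2 * 2^-1 ^+ n - 2 * 2^-1 ^+ m.
  move=> /subnKC <-; elim: (m - n)%N => [|d IHd]; first by rewrite addn0 subrr (absv0 a_abs); lra.
  apply: le_trans (ler_absv_distD a_abs _ (u (n + d)%N) _) _.
  have := u_step (n + d)%N; rewrite addnS exprS; lra.
apply: a_complete => e e_gt0.
have [N HN] := @expr_lt_eventually (2^-1) (e / 2) ltac:(lra) ltac:(lra).
exists N => m n Nm Nn.
have dist_lt k l : (N <= k)%N -> (k <= l)%N -> a (u k - u l) < e.
  move=> Nk kl; apply: le_lt_trans (u_dist _ _ kl) _.
  have := HN k Nk; have := exprn_ge0 l (_ : 0 <= 2^-1 :> RR); lra.
have [mn|nm] := leqP m n; first exact: dist_lt.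
by rewrite (absv_distC a_abs) dist_lt // ltnW.
Qed.

Lemma root_of_absv_cvg (P : {poly L}) (u : nat -> L) l (M : RR) :
  (forall n, a (u n) <= M) -> absv_cvg a u l -> absv_cvg a (fun n => P.[u n]) 0 ->
  root P l.
Proof.
move=> uM u_l Pu0; apply/rootP/(absv_eq0 a_abs); apply/eqP; rewrite eq_le absv_ge0 andbT.
apply/ler_addgt0Pr => e e_gt0; rewrite add0r.
have [N1 HN1] := u_l 1 ltr01.
have lM : a l <= M + 1.
  have := ler_absv_distD a_abs 0 (u N1) l; rewrite !sub0r !(absvN a_abs).
  by have := HN1 N1 (leqnn _); have := uM N1; rewrite (absv_distC a_abs); lra.
have [C C_ge0 PC] := horner_lipschitz a_abs P (M + 1).
have [N2 HN2] := u_l (e / 2 / (C + 1)) ltac:(by rewrite !divr_gt0 //; lra).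
have [N3 HN3] := Pu0 (e / 2) ltac:(lra).
pose n := (N2 + N3)%N; have := HN3 n (leq_addl _ _); rewrite subr0 => Pun.
have := PC l (u n) lM ltac:(by have := uM n; lra).
rewrite (absv_distC a_abs (l)) => Pl_Pun.
have : C * a (u n - l) <= e / 2.
  have := HN2 n (leq_addr _ _); rewrite ltr_pdivlMr; last lra.
  by have := absv_ge0 (u n - l); nra.
have := ler_absvD a_abs (P.[l] - P.[u n]) P.[u n]; rewrite subrK; lra.
Qed.

Section RootApproximation.
Variable P : {poly L}.
Hypothesis P_monic : P \is monic.
Variable Q : RR -> {poly L}.
Hypothesis Q_size : forall d, 0 < d -> size (Q d) = size P.
Hypothesis Q_close : forall d, 0 < d -> forall k, a (P`_k - (Q d)`_k) <= d.
Hypothesis Q_splits : forall d, 0 < d -> splits (Q d).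

Let N := (size P).-1.
Let M := 1 + \sum_(k < N) (a P`_k + 1).
Let C := N.+1%:R * M ^+ N.

Let M_ge1 : 1 <= M.
Proof. by rewrite lerDl sumr_ge0 // => k _; rewrite addr_ge0 ?absv_ge0. Qed.

Let C_ge1 : 1 <= C.
Proof. by rewrite -[1]mulr1 ler_pM ?ler1n ?exprn_ege1. Qed.

Lemma approx_root_le d x : 0 < d <= 1 -> root (Q d) x -> a x <= M.
Proof.
move=> /andP[d_gt0 d_le1] Qx; have [rs Qrs] := Q_splits d_gt0.
apply: le_trans (monic_root_le a_abs _ Qx) _; first by rewrite Qrs monic_prod_XsubC.
rewrite lerD2l Q_size // ler_sum // => k _.
have := ler_absv_distD a_abs (Q d)`_k P`_k 0; rewrite !subr0 => /le_trans; apply.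
by rewrite addrC lerD2l (absv_distC a_abs); apply: le_trans (Q_close d_gt0 k) d_le1.
Qed.

Lemma approx_horner_le d d' x : 0 < d -> 0 < d' -> a x <= M ->
  a ((Q d).[x] - (Q d').[x]) <= C * (d + d').
Proof.
move=> d_gt0 d'_gt0 xM; rewrite /C mulrAC.
apply: horner_coef_diff; rewrite ?Q_size -?polySpred ?monic_neq0 //.
move=> k; apply: le_trans (ler_absv_distD a_abs _ P`_k _) _.
by rewrite (absv_distC a_abs) lerD ?Q_close.
Qed.

Lemma approx_horner_P d x : 0 < d -> a x <= M -> a (P.[x] - (Q d).[x]) <= C * d.
Proof.
move=> d_gt0 xM; rewrite /C mulrAC.
by apply: horner_coef_diff; rewrite ?Q_size -?polySpred ?monic_neq0 // => k; apply: Q_close.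
Qed.

Lemma approx_has_root : (0 < N)%N -> exists x, root P x.
Proof.
move=> N_gt0; pose eta k : RR := 2^-1 ^+ k; pose delta k := eta k ^+ N / (4 * C).
have half_ge0 : 0 <= 2^-1 :> RR by lra.
have eta_gt0 k : 0 < eta k by rewrite exprn_gt0 //; lra.
have eta_le1 k : eta k <= 1 by rewrite exprn_ile1 //; lra.
have etaN_le k : eta k ^+ N <= eta k.
  rewrite -(prednK N_gt0) exprS; apply: ler_piMr; first exact: ltW.
  exact: exprn_ile1 (ltW (eta_gt0 k)) (eta_le1 k).
have C_delta k : C * delta k = eta k ^+ N / 4.
  by rewrite /delta; field; rewrite gt_eqF //; apply: lt_le_trans C_ge1.
have delta_gt0 k : 0 < delta k by rewrite divr_gt0 ?exprn_gt0 //; have := C_ge1; lra.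
have delta_le k : delta k <= eta k / 4.
  have := C_delta k; have := etaN_le k; have := delta_gt0 k; have := C_ge1; nra.
have delta_le1 k : 0 < delta k <= 1 by rewrite delta_gt0 /=; have := delta_le k; have := eta_le1 k; lra.
have delta_S k : delta k.+1 <= delta k.
  rewrite ler_pM2r; last by rewrite invr_gt0; have := C_ge1; lra.
  by rewrite lerXn2r ?nnegrE ?ltW // /eta exprS gtr_pMl ?exprn_gt0 //; lra.
have step k x : root (Q (delta k)) x ->
    exists y, root (Q (delta k.+1)) y /\ a (x - y) <= eta k.
  move=> Qx; have xM := approx_root_le (delta_le1 k) Qx.
  have [rs Qrs] := Q_splits (delta_gt0 k.+1).
  have rs_size : size rs = N by rewrite /N -(Q_size (delta_gt0 k.+1)) Qrs size_prod_XsubC.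
  have [|z z_rs xz] := near_root a_abs (ltW (eta_gt0 k)) (x := x) (rs := rs).
    rewrite rs_size -Qrs -(absvN a_abs) -sub0r -(rootP Qx).
    apply: le_lt_trans (approx_horner_le _ _ xM) _ => //.
    by have := C_delta k; have := delta_S k; have := C_ge1; have := delta_gt0 k.+1; nra.
  by exists z; rewrite Qrs root_prod_XsubC z_rs ltW.
have [x0 Qx0] : exists x0, root (Q (delta 0)) x0.
  have [[|z rs] Qrs] := Q_splits (delta_gt0 0).
    by move: (Q_size (delta_gt0 0)) N_gt0; rewrite Qrs big_nil size_poly1 /N => <-.
  by exists z; rewrite Qrs root_prod_XsubC mem_head.
have [x x_roots] := dependent_sequence Qx0 step.
have [l x_l] : exists l, absv_cvg a x l by apply: absv_cvg_halving => k; case: (x_roots k).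
exists l; apply: (@root_of_absv_cvg P x l M) => // [n|e e_gt0].
  by case: (x_roots n) => /(approx_root_le (delta_le1 n)).
have [K HK] := @expr_lt_eventually (2^-1) e ltac:(lra) e_gt0.
exists K => n Kn; rewrite subr0 -[P.[x n]]subr0; case: (x_roots n) => /rootP <- _.
apply: le_lt_trans (approx_horner_P (delta_gt0 n) _) _.
  by case: (x_roots n) => /(approx_root_le (delta_le1 n)).
by rewrite C_delta; have := HK n Kn; rewrite -/(eta n); have := etaN_le n; have := eta_gt0 n; lra.
Qed.

End RootApproximation.

Theorem root_of_splitting_approx (P : {poly L}) : P \is monic -> (1 < size P)%N ->
  (forall d, 0 < d -> exists Q : {poly L},
     [/\ size Q = size P, forall k, a (P`_k - Q`_k) <= d & splits Q]) ->
  exists x, root P x.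
Proof.
move=> P_monic P_size approx.
have approx' d : exists Q : {poly L}, 0 < d ->
    [/\ size Q = size P, forall k, a (P`_k - Q`_k) <= d & splits Q].
  have [/approx[Q HQ]|d_le0] := boolp.pselect (0 < d); first by exists Q.
  by exists 0 => /d_le0.
have [Q HQ] := boolp.choice approx'.
apply: (@approx_has_root P P_monic Q); first by move=> d /HQ[].
- by move=> d /HQ[].
- by move=> d /HQ[].
by rewrite -ltnS prednK // ltnW.
Qed.

End CompleteValuedField.


Lemma padic_abs_prime p : prime p -> padic_abs p p%:R = p%:R^-1.
Proof.
move=> p_prime; rewrite /padic_abs /padic_val pnatr_eq0 (gtn_eqF (prime_gt0 p_prime)) /=.
rewrite (_ : p%:R = p%:Z%:Q) // numq_int denq_int /= logn1 subr0 logn_prime // eqxx.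
by rewrite -invr_expz expr1z.
Qed.

Lemma padic_type_prime_lt1 (K : fieldType) (a : K -> RR) p :
  prime p -> padic_type a p -> a p%:R < 1.
Proof.
move=> p_prime [c [c_gt0 a_padic]].
have p_gt1 : 1 < p%:R :> RR by rewrite ltr1n prime_gt1.
have -> : 1 = 1 `^ c :> RR by rewrite powR1.
rewrite -(ratr_nat _ p) a_padic padic_abs_prime //.
by apply: gt0_ltr_powR; rewrite // ?nnegrE ?invr_ge0 ?invf_lt1 //; lra.
Qed.

Lemma sqrtN1_of_natr_lt1 (K L : fieldType) (i : {rmorphism K -> L}) (a : L -> RR) p :
  real_closed K -> is_absolute_value a -> abs_complete a -> (0 < p)%N -> a p%:R < 1 ->
  exists j : L, j * j = -1.
Proof.
move=> K_rc a_abs a_complete p_gt0 p_lt1.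
have P_monic : ('X^2 + 1 : {poly L}) \is monic.
  by rewrite monicE lead_coefDl ?lead_coefXn // size_polyXn size_poly1.
have P_size : size ('X^2 + 1 : {poly L}) = 3 by rewrite size_polyDl ?size_polyXn ?size_poly1.
have [j] : exists j, root ('X^2 + 1 : {poly L}) j.
  apply: (root_of_splitting_approx a_abs a_complete P_monic); first by rewrite P_size.
  move=> d d_gt0.
  have [N HN] := @expr_lt_eventually (a p%:R) d ltac:(by rewrite absv_ge0) d_gt0.
  have [t tt] := real_closed_natr_sqrt K_rc (p ^ N.+1).-1.
  exists ('X^2 - (i (t * t))%:P); split.
  - by rewrite size_polyDl ?size_polyXn ?size_polyN ?size_polyC ?P_size //; case: (_ != 0).
  - move=> k; rewrite -coefB.
    have -> : 'X^2 + 1 - ('X^2 - (i (t * t))%:P) = ((p ^ N.+1)%:R)%:P :> {poly L}.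
      have pN_gt0 : (0 < p ^ N.+1)%N by rewrite expn_gt0 p_gt0.
      rewrite tt rmorph_nat -[in RHS](prednK pN_gt0) -natr1 polyCD.
      by rewrite polyC1; ring.
    rewrite coefC; case: eqP => _; last by rewrite (absv0 a_abs) ltW.
    by rewrite natrX (absvX a_abs) ltW ?HN.
  - exists [:: i t; - i t].
    by rewrite !big_cons big_nil mulr1 rmorphM polyCM polyCN; ring.
move=> /rootP; rewrite hornerD hornerXn hornerC => /eqP.
by rewrite addr_eq0 expr2 => /eqP j2; exists j.
Qed.

Lemma dense_monic_approx (K L : fieldType) (i : {rmorphism K -> L}) (a : L -> RR) :
  is_absolute_value a -> (forall y e, 0 < e -> exists x, a (y - i x) < e) ->
  forall (P : {poly L}) d, P \is monic -> 0 < d -> exists q : {poly K},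
    [/\ q \is monic, size (map_poly i q) = size P &
        forall k, a (P`_k - (map_poly i q)`_k) <= d].
Proof.
move=> a_abs i_dense P d P_monic d_gt0; set N := (size P).-1.
have [x Px] := boolp.choice (fun k => i_dense P`_k d d_gt0).
have q_size : size ('X^N + \poly_(k < N) x k : {poly K}) = N.+1.
  by rewrite size_polyDl size_polyXn // ltnS size_poly.
have P_size : size P = N.+1 by rewrite prednK // size_poly_gt0 monic_neq0.
exists ('X^N + \poly_(k < N) x k); split.
- by rewrite monicE lead_coefDl ?lead_coefXn // size_polyXn ltnS size_poly.
- by rewrite size_map_poly q_size.
move=> k; rewrite coef_map /= coefD coefXn coef_poly.
have [k_lt_N|k_ge_N] := ltnP k N; first by rewrite (ltn_eqF k_lt_N) add0r ltW.
rewrite addr0; have [->|k_neq_N] := eqVneq k N.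
  have -> : P`_N = 1 by move/monicP: P_monic.
  by rewrite rmorph1 subrr (absv0 a_abs) ltW.
rewrite rmorph0 subr0 nth_default ?(absv0 a_abs) ?ltW // P_size.
by rewrite ltn_neqAle eq_sym k_neq_N k_ge_N.
Qed.

Lemma alg_closed_of_monic (L : fieldType) :
  (forall P : {poly L}, P \is monic -> (1 < size P)%N -> exists x, root P x) ->
  alg_closed L.
Proof.
move=> monic_root P P_size.
have lcP_neq0 : lead_coef P != 0 by rewrite lead_coef_eq0 -size_poly_gt0 ltnW.
have [x] : exists x, root ((lead_coef P)^-1 *: P) x.
  apply: monic_root; first by rewrite monicE lead_coefZ mulVf.
  by rewrite size_scale // invr_eq0.
by rewrite rootZ ?invr_eq0 //; exists x.
Qed.

Theorem corollary5p9 (K : fieldType) (aK : K -> Rdefinitions.R) (p : nat) :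
  is_absolute_value aK -> real_closed K -> prime p -> padic_type aK p ->
  forall (L : fieldType) (aL : L -> Rdefinitions.R) (i : {rmorphism K -> L}),
    is_completion aK aL i -> alg_closed L.
Proof.
move=> _ K_rc p_prime p_type L aL i [aL_abs [aL_complete [i_isometry i_dense]]].
have p_small : aL p%:R < 1.
  by rewrite -(rmorph_nat i) i_isometry; apply: padic_type_prime_lt1 p_type.
have [j j2] := sqrtN1_of_natr_lt1 i K_rc aL_abs aL_complete (prime_gt0 p_prime) p_small.
apply: alg_closed_of_monic => P P_monic P_size.
apply: (root_of_splitting_approx aL_abs aL_complete P_monic P_size) => d d_gt0.
have [q [q_monic q_size q_close]] := dense_monic_approx aL_abs i_dense P_monic d_gt0.
by exists (map_poly i q); split => //; apply: real_closed_split K_rc j2 q q_monic.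
Qed.
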